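(* Consider the multi-queue bandit under Q-ThS(match) as described in the context. For every $u\in[U]$ and every $t\ge1$, almost surely $$Q_u(t)-Q^*_u(t)\le\sum_{l=t-B_u(t)+1}^{t}\left(\mathsf E(l)+\sum_{k\ne k^*_u}\mathsf I_{uk}(l)\right),$$ where $B_u(t)=\min\{s\ge0:Q_u(t-s)=0\}$.
   Context: Discrete-time system with $U$ queues and $K$ servers, $1\le U\le K$. Arrivals $A_u(t)\in\{0,1\}$ to queue $u$ are Bernoulli($\lambda_u$), and the service $R_{uk}(t)\in\{0,1\}$ of server $k$ to queue $u$ is Bernoulli($\mu_{uk}$); all mutually independent and i.i.d. across slots. Each slot a matching is scheduled; $\kappa_u(t)$ is the server assigned to queue $u$, $S_u(t)=R_{u\kappa_u(t)}(t)$, $Q_u(t)=(Q_u(t-1)+A_u(t)-S_u(t))^+$. For each $u$, $k^*_u$ is the unique maximizer of $\mu_{uk}$ over $k$ (distinct across queues). The genie queue is $Q^*_u(t)=(Q^*_u(t-1)+A_u(t)-R_{uk^*_u}(t))^+$ with the same arrivals and services; $Q^*_u(0)\ge0$. $B_u(t)$ is the time elapsed since queue $u$ was last empty (time $t-B_u(t)$ is the last instant at or before $t$ with $Q_u=0$). Algorithm Q-ThS(match): at each time $l$ an independent Bernoulli exploration indicator $\mathsf E(l)$ (mean $\min\{1,3K\log^2l/l\}$) decides whether a matching is scheduled by exploration ($\mathsf E(l)=1$: uniformly random from a fixed set of $K$ matchings covering all pairs) or by exploitation (Thompson sampling with Beta posteriors, projected onto matchings). $\mathsf I_{uk}(l)$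 is the indicator that server $k$ is assigned to queue $u$ at time $l$ in an exploit step. *)

From HB Require Import structures.
From mathcomp Require Import all_boot all_order all_algebra.
Set Implicit Arguments. Unset Strict Implicit. Unset Printing Implicit Defensive.
Import Order.TTheory GRing.Theory Num.Theory.

(* One sample path of the system. Time slots are nat; slot 0 holds the
   initial conditions, slots l >= 1 are the scheduling slots.
   Queues are 'I_U, servers are 'I_K. *)

(* Real queue recursion: Q_u(l) = (Q_u(l-1) + A_u(l) - R_{u kappa_u(l)}(l))^+ ;
   truncated nat subtraction realizes (.)^+. *)
Definition real_queue U K (A : nat -> 'I_U -> bool) (R : nat -> 'I_U -> 'I_K -> bool)
  (kappa : nat -> 'I_U -> 'I_K) (Q : nat -> 'I_U -> nat) : Prop :=
  forall u l, 0 < l -> Q l u = (Q l.-1 u + A l u - R l u (kappa l u))%N.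

Definition genie_queue U K (A : nat -> 'I_U -> bool) (R : nat -> 'I_U -> 'I_K -> bool)
  (kstar : 'I_U -> 'I_K) (Qs : nat -> 'I_U -> nat) : Prop :=
  forall u l, 0 < l -> Qs l u = (Qs l.-1 u + A l u - R l u (kstar u))%N.

Definition Iexploit U K (E : nat -> bool) (kappa : nat -> 'I_U -> 'I_K)
  (u : 'I_U) (k : 'I_K) (l : nat) : bool :=
  ~~ E l && (kappa l u == k).

From HB Require Import structures.
From mathcomp Require Import all_boot all_order all_algebra.
From mathcomp Require Import zify.
Import Order.TTheory GRing.Theory Num.Theory.

Set Implicit Arguments.
Unset Strict Implicit.
Unset Printing Implicit Defensive.

(* Both queues see the same arrivals, so in one slot the gap Q - Q* can grow
   only when the genie's best server succeeds and the server actually given to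
   queue u fails; that happens only when u was not served by its best server,
   i.e. in an exploration slot or an exploit slot with a suboptimal server.
   Summing this one-slot bound from the last instant t - B where Q_u was empty
   (so the gap was 0) gives the claim. *)

Lemma lindley_gap (q qs a r rs : nat) :
  (q + a - r) - (qs + a - rs) <= (q - qs) + (rs - r).
Proof. lia. Qed.

Lemma gap_telescope (d c : nat -> nat) (s : nat) :
  (forall l, s < l -> d l <= d l.-1 + c l) ->
  forall m, s <= m -> d m <= d s + \sum_(s.+1 <= l < m.+1) c l.
Proof.
move=> hstep; elim=> [|m IH] hsm.
  by move: hsm; rewrite leqn0 => /eqP ->; rewrite big_geq ?addn0.
case: (ltngtP s m.+1) hsm => // [hsm _|-> _]; last by rewrite big_geq ?addn0.
rewrite big_nat_recr //= addnA.
exact: leq_trans (hstep _ hsm) (leq_add (IH hsm) (leqnn _)).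
Qed.

Section SuboptimalSlots.

Variables (U K : nat) (E : nat -> bool) (kappa : nat -> 'I_U -> 'I_K).
Variables (kstar : 'I_U -> 'I_K) (u : 'I_U).

Definition suboptimal_slot (l : nat) : nat :=
  E l + \sum_(k : 'I_K | k != kstar u) Iexploit E kappa u k l.

Lemma suboptimal_slot_gt0 (l : nat) :
  kappa l u != kstar u -> 0 < suboptimal_slot l.
Proof.
move=> hne; rewrite /suboptimal_slot; case hE: (E l) => //=.
by rewrite (bigD1 (kappa l u)) //= /Iexploit hE eqxx.
Qed.

Lemma service_loss_le_suboptimal_slot (l : nat) (r : 'I_K -> bool) :
  r (kstar u) - r (kappa l u) <= suboptimal_slot l.
Proof.
have [->|hne] := eqVneq (kappa l u) (kstar u); first by rewrite subnn.
rewrite (leq_trans (leq_subr _ _)) // (leq_trans (leq_b1 _)) //.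
exact: suboptimal_slot_gt0.
Qed.

Lemma queue_gap_step (A : nat -> 'I_U -> bool) (R : nat -> 'I_U -> 'I_K -> bool)
    (Q Qs : nat -> 'I_U -> nat) (l : nat) :
  real_queue A R kappa Q -> genie_queue A R kstar Qs -> 0 < l ->
  Q l u - Qs l u <= (Q l.-1 u - Qs l.-1 u) + suboptimal_slot l.
Proof.
move=> hQ hQs hl; rewrite hQ // hQs //.
exact: leq_trans (lindley_gap _ _ _ _ _)
  (leq_add (leqnn _) (service_loss_le_suboptimal_slot _ _)).
Qed.

End SuboptimalSlots.

Theorem lemma3
  (Rt : realFieldType) (U K : nat) (hU : (1 <= U)%N) (hUK : (U <= K)%N)
  (mu : 'I_U -> 'I_K -> Rt) (kstar : 'I_U -> 'I_K)
  (hkstar : forall u k, k != kstar u -> (mu u k < mu u (kstar u))%R)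
  (hkstar_inj : injective kstar)
  (A : nat -> 'I_U -> bool) (R : nat -> 'I_U -> 'I_K -> bool)
  (E : nat -> bool)
  (M : 'I_K -> 'I_U -> 'I_K)
  (hM_match : forall j, injective (M j))
  (hM_cover : forall u k, exists j, M j u = k)
  (kappa : nat -> 'I_U -> 'I_K)
  (hkappa_match : forall l, injective (kappa l))
  (hkappa_explore : forall l, E l -> exists j, kappa l = M j)
  (Q Qs : nat -> 'I_U -> nat)
  (hQ : real_queue A R kappa Q)
  (hQs : genie_queue A R kstar Qs)
  (u : 'I_U) (t : nat) (ht : (1 <= t)%N)
  (B : nat) (hB_le : (B <= t)%N) (hB_zero : Q (t - B)%N u = 0%N)
  (hB_min : forall s, (s < B)%N -> Q (t - s)%N u <> 0%N) :
  ((Q t u)%:Z - (Qs t u)%:Z <=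
    (\sum_(t - B + 1 <= l < t + 1)
       (E l + \sum_(k : 'I_K | k != kstar u) Iexploit E kappa u k l))%N%:Z)%R.
Proof.
have hstep l : t - B < l ->
    Q l u - Qs l u <= (Q l.-1 u - Qs l.-1 u) + suboptimal_slot E kappa kstar u l.
  by move=> hl; apply: queue_gap_step hQ hQs (leq_ltn_trans (leq0n _) hl).
have := gap_telescope hstep (leq_subr B t).
rewrite hB_zero sub0n add0n !addn1 => hgap.
by rewrite lerBlDr -PoszD lez_nat addnC -leq_subLR.
Qed.
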